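(* Let $\Gamma$ be a represented pointclass satisfying the standing assumptions and (uniformly computably) closed under the operation $(A_n)_{n\in\mathbb{N}}\mapsto\{01^\mathbb{N}\}\cup\bigcup_{n\in\mathbb{N}}1^n0A_n$. Then $\mathrm{FindWS}_\Gamma\equiv_W\widehat{\mathrm{FindWS}_\Gamma}$.
   Context: $f\leq_W g$ iff there are computable partial $K,H:\subseteq\mathbb{N}^\mathbb{N}\to\mathbb{N}^\mathbb{N}$ such that for every realizer $G$ of $g$, $p\mapsto K(\langle p,G(H(p))\rangle)$ realizes $f$; $\equiv_W$ induced equivalence. $\widehat{f}(x_0,x_1,\ldots)=(f(x_0),f(x_1),\ldots)$. Win/lose games: players 1,2, choices $\{0,1\}$, turn function $d:\{0,1\}^*\to\{1,2\}$ (lookup table), winning set for player 1 (complement for player 2); $wA=\{wp\mid p\in A\}$. $\mathrm{FindWS}_\Gamma$: input a win/lose game whose player-1 winning set is given by a $\Gamma$-name and in which player 1 has a winning strategy; output a strategy profile ($\{0,1\}^*\to\{0,1\}$) in which one strategy is winning (necessarily player 1's). Standing assumptions on a represented pointclass $\Gamma$ of subsets of $\{0,1\}^\mathbb{N}$: every win/lose game with player-1 winning set in $\Gamma$ is determined; $\emptyset,\{0,1\}^\mathbb{N}\in\Gamma$; $\Gamma$ is uniformly computably closed under rescaling $(w,A)\mapsto wA$ and its inverse and under intersection with clopen sets. *)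

From Stdlib Require Import List Arith Bool.
Import ListNotations.

Definition baire := nat -> nat.
Definition cantor := nat -> bool.

(* Oracle (relative) mu-recursive functions: Kleene's schemes plus an
   oracle primitive.  [eval p e xs v] : the code [e], run on arguments [xs]
   with oracle [p], halts with value [v]. *)
Inductive rf : Type :=
| rfZero : rf
| rfSucc : rf
| rfProj : nat -> rf
| rfOracle : rf
| rfComp : rf -> list rf -> rf
| rfPrimRec : rf -> rf -> rf
| rfMu : rf -> rf.

Inductive eval (p : baire) : rf -> list nat -> nat -> Prop :=
| ev_zero : forall xs, eval p rfZero xs 0
| ev_succ : forall x xs, eval p rfSucc (x :: xs) (S x)
| ev_proj : forall i xs v, nth_error xs i = Some v -> eval p (rfProj i) xs v
| ev_oracle : forall x xs, eval p rfOracle (x :: xs) (p x)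
| ev_comp : forall f gs xs ys v,
    eval_list p gs xs ys -> eval p f ys v -> eval p (rfComp f gs) xs v
| ev_rec0 : forall f g xs v, eval p f xs v -> eval p (rfPrimRec f g) (0 :: xs) v
| ev_recS : forall f g n xs w v,
    eval p (rfPrimRec f g) (n :: xs) w -> eval p g (n :: w :: xs) v ->
    eval p (rfPrimRec f g) (S n :: xs) v
| ev_mu : forall f xs n,
    eval p f (n :: xs) 0 ->
    (forall m, m < n -> exists k, eval p f (m :: xs) (S k)) ->
    eval p (rfMu f) xs n
with eval_list (p : baire) : list rf -> list nat -> list nat -> Prop :=
| evl_nil : forall xs, eval_list p [] xs []
| evl_cons : forall g gs xs y ys,
    eval p g xs y -> eval_list p gs xs ys -> eval_list p (g :: gs) xs (y :: ys).

(* Partial functions on Baire space: [F p = None] means p is outside dom F. *)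
Definition pfun := baire -> option baire.

Definition computable (F : pfun) : Prop :=
  exists e : rf, forall p q, F p = Some q -> forall n, eval p e [n] (q n).

Definition join (p q : baire) : baire :=
  fun n => if Nat.even n then p (Nat.div2 n) else q (Nat.div2 n).
Definition lhalf (r : baire) : baire := fun n => r (2 * n).
Definition rhalf (r : baire) : baire := fun n => r (2 * n + 1).
Definition cpair (i n : nat) : nat := (i + n) * (i + n + 1) / 2 + n.
Definition component (r : baire) (i : nat) : baire := fun n => r (cpair i n).

Record rep_space := { carrier : Type; rep : baire -> carrier -> Prop }.

Definition prod_space (X Y : rep_space) : rep_space :=
  {| carrier := (carrier X * carrier Y)%type;
     rep := fun r xy => rep X (lhalf r) (fst xy) /\ rep Y (rhalf r) (snd xy) |}.

Definition seq_space (X : rep_space) : rep_space :=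
  {| carrier := nat -> carrier X;
     rep := fun r xs => forall i, rep X (component r i) (xs i) |}.

(* multi-valued f :⊆ X ⇉ Y ; dom f = { x | exists y, f x y } *)
Definition mvf (X Y : rep_space) := carrier X -> carrier Y -> Prop.

Definition realizes {X Y : rep_space} (f : mvf X Y) (F : pfun) : Prop :=
  forall p x, rep X p x -> (exists y, f x y) ->
    exists q, F p = Some q /\ exists y, rep Y q y /\ f x y.

Definition pcomp (F G : pfun) : pfun :=
  fun p => match G p with Some q => F q | None => None end.

Definition weihrauch_le {X Y U V : rep_space} (f : mvf X Y) (g : mvf U V) : Prop :=
  exists K H : pfun, computable K /\ computable H /\
    forall G : pfun, realizes g G ->
      realizes f (fun p => match pcomp G H p with
                           | Some q => K (join p q)
                           | None => None end).

Definition weihrauch_equiv {X Y U V : rep_space} (f : mvf X Y) (g : mvf U V) : Prop :=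
  weihrauch_le f g /\ weihrauch_le g f.

Definition parallelization {X Y : rep_space} (f : mvf X Y)
  : mvf (seq_space X) (seq_space Y) :=
  fun xs ys => forall i, f (xs i) (ys i).

Definition computable_op {X Y : rep_space} (op : carrier X -> carrier Y) : Prop :=
  exists F : pfun, computable F /\
    forall p x, rep X p x -> exists q, F p = Some q /\ rep Y q (op x).

(* Finite words over {0,1} (false = 0, true = 1), first letter first *)
Definition word := list bool.

Fixpoint wcode (w : word) : nat :=
  match w with [] => 0 | b :: w' => 2 * wcode w' + (if b then 2 else 1) end.

Definition prefix (k : nat) (x : cantor) : word := map x (seq 0 k).

Definition bit (b : bool) : nat := if b then 1 else 0.

Definition word_space : rep_space :=
  {| carrier := word;
     rep := fun p w => p 0 = length w /\
                       forall i, i < length w -> p (S i) = bit (nth i w false) |}.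

(* clopen subsets of Cantor space: name p gives a depth p 0 and a truth
   table over words of that length *)
Definition clopen_space : rep_space :=
  {| carrier := cantor -> Prop;
     rep := fun p C => forall x, C x <-> p (S (wcode (prefix (p 0) x))) <> 0 |}.

Definition prepend (w : word) (x : cantor) : cantor :=
  fun n => if n <? length w then nth n w false else x (n - length w).
Definition shift (k : nat) (x : cantor) : cantor := fun n => x (k + n).

Definition rescale (wA : word * (cantor -> Prop)) : cantor -> Prop :=
  fun x => prefix (length (fst wA)) x = fst wA /\ snd wA (shift (length (fst wA)) x).
Definition unscale (wB : word * (cantor -> Prop)) : cantor -> Prop :=
  fun x => snd wB (prepend (fst wB) x).
Definition clopen_inter (CA : (cantor -> Prop) * (cantor -> Prop)) : cantor -> Prop :=
  fun x => fst CA x /\ snd CA x.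

Definition tree_op (As : nat -> cantor -> Prop) : cantor -> Prop :=
  fun x => (x 0 = false /\ forall k, x (S k) = true) \/
           exists n, (forall i, i < n -> x i = true) /\ x n = false /\
                     As n (shift (S n) x).

(* Win/lose games.  Turn function d : {0,1}^* -> {1,2} encoded as
   d w = true (player 1 moves) / false (player 2 moves). *)
Definition turnfun := word -> bool.
Definition strategy := word -> bool.

Fixpoint history (d : turnfun) (s1 s2 : strategy) (n : nat) : word :=
  match n with
  | 0 => []
  | S m => let h := history d s1 s2 m in
           h ++ [if d h then s1 h else s2 h]
  end.

Definition play (d : turnfun) (s1 s2 : strategy) : cantor :=
  fun n => let h := history d s1 s2 n in if d h then s1 h else s2 h.

Definition winning1 (d : turnfun) (A : cantor -> Prop) (s : strategy) : Prop :=
  forall t, A (play d s t).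
Definition winning2 (d : turnfun) (A : cantor -> Prop) (t : strategy) : Prop :=
  forall s, ~ A (play d s t).

Definition pointclass_name := baire -> (cantor -> Prop) -> Prop.

Definition gamma_space (nm : pointclass_name) : rep_space :=
  {| carrier := cantor -> Prop; rep := nm |}.

Definition turn_space : rep_space :=
  {| carrier := turnfun; rep := fun p d => forall w, d w = Nat.eqb (p (wcode w)) 0 |}.

Definition game_space (nm : pointclass_name) : rep_space :=
  prod_space turn_space (gamma_space nm).

Definition profile_space : rep_space :=
  {| carrier := strategy;
     rep := fun p s => forall w, s w = negb (Nat.eqb (p (wcode w)) 0) |}.

Definition FindWS (nm : pointclass_name) : mvf (game_space nm) profile_space :=
  fun g s => (exists s1, winning1 (fst g) (snd g) s1) /\
             (winning1 (fst g) (snd g) s \/ winning2 (fst g) (snd g) s).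

Record standing_assumptions (nm : pointclass_name) : Prop := {
  (* nm is a representation of a class of sets (up to extensional equality) *)
  sa_ext : forall p A B, nm p A -> (forall x, A x <-> B x) -> nm p B;
  sa_fun : forall p A B, nm p A -> nm p B -> forall x, A x <-> B x;
  sa_det : forall d A, (exists p, nm p A) ->
             (exists s, winning1 d A s) \/ (exists t, winning2 d A t);
  sa_empty : exists p, nm p (fun _ => False);
  sa_full : exists p, nm p (fun _ => True);
  sa_rescale : @computable_op (prod_space word_space (gamma_space nm))
                              (gamma_space nm) rescale;
  sa_unscale : @computable_op (prod_space word_space (gamma_space nm))
                              (gamma_space nm) unscale;
  sa_clopen : @computable_op (prod_space clopen_space (gamma_space nm))
                             (gamma_space nm) clopen_inter
}.

(* Asking for a constant sequence shows that FindWS reduces to its parallelization.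
   Conversely, a sequence of games (d_m, A_m) is merged into a single game: player 1
   opens with 0, then player 2 either plays 1 forever (and loses) or selects a branch
   m by playing 1^m 0, after which game m is played.  Its winning set is
   {0 1^N} ∪ ⋃_m 0 1^m 0 A_m on sequences starting with 0, and it is obtained in Γ
   from the A_m by the tree operation and unscaling.  Since player 1 wins every game,
   he wins the merged one, and since player 2 may select any branch, a winning
   strategy for the merged game restricts to winning strategies for all the games. *)

From Stdlib Require Import List Arith Bool Lia FunctionalExtensionality Classical
  IndefiniteDescription ConstructiveEpsilon.
Import ListNotations.

(** * Primitive recursive programs *)

Definition computes (k : nat) (e : rf) (f : baire -> list nat -> nat) : Prop :=
  forall p xs, k <= length xs -> eval p e xs (f p xs).

Lemma computes_ext k e f g : computes k e f ->
  (forall p xs, k <= length xs -> f p xs = g p xs) -> computes k e g.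
Proof. intros H E p xs L. rewrite <- E by exact L. apply H, L. Qed.

Lemma computes_weaken k k' e f : computes k e f -> k <= k' -> computes k' e f.
Proof. intros H L p xs L'. apply H. lia. Qed.

Lemma computes_zero : computes 0 rfZero (fun _ _ => 0).
Proof. intros p xs _. constructor. Qed.

Lemma computes_succ : computes 1 rfSucc (fun _ xs => S (nth 0 xs 0)).
Proof. intros p [|x xs] L; simpl in *; [lia|constructor]. Qed.

Lemma computes_proj i : computes (S i) (rfProj i) (fun _ xs => nth i xs 0).
Proof. intros p xs L. constructor. apply nth_error_nth'. lia. Qed.

Lemma computes_oracle : computes 1 rfOracle (fun p xs => p (nth 0 xs 0)).
Proof. intros p [|x xs] L; simpl in *; [lia|constructor]. Qed.

Lemma computes_comp k e f es fs : computes (length fs) e f ->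
  Forall2 (computes k) es fs ->
  computes k (rfComp e es) (fun p xs => f p (map (fun g => g p xs) fs)).
Proof.
  intros He Hes p xs L. apply ev_comp with (ys := map (fun g => g p xs) fs).
  - clear He. induction Hes; simpl; constructor; auto.
  - apply He. rewrite length_map. lia.
Qed.

Lemma computes_comp1 k e f e1 f1 : computes 1 e f -> computes k e1 f1 ->
  computes k (rfComp e [e1]) (fun p xs => f p [f1 p xs]).
Proof. intros. apply (computes_comp k e f [e1] [f1]); auto. Qed.

Lemma computes_comp2 k e f e1 f1 e2 f2 :
  computes 2 e f -> computes k e1 f1 -> computes k e2 f2 ->
  computes k (rfComp e [e1; e2]) (fun p xs => f p [f1 p xs; f2 p xs]).
Proof. intros. apply (computes_comp k e f [e1; e2] [f1; f2]); auto. Qed.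

Lemma computes_comp3 k e f e1 f1 e2 f2 e3 f3 :
  computes 3 e f -> computes k e1 f1 -> computes k e2 f2 -> computes k e3 f3 ->
  computes k (rfComp e [e1; e2; e3]) (fun p xs => f p [f1 p xs; f2 p xs; f3 p xs]).
Proof. intros. apply (computes_comp k e f [e1; e2; e3] [f1; f2; f3]); auto. Qed.

Lemma computes_primrec k e0 f0 es fs (f : baire -> nat -> list nat -> nat) :
  computes k e0 f0 -> computes (S (S k)) es fs ->
  (forall p ys, k <= length ys -> f p 0 ys = f0 p ys) ->
  (forall p n ys, k <= length ys -> f p (S n) ys = fs p (n :: f p n ys :: ys)) ->
  computes (S k) (rfPrimRec e0 es) (fun p xs => f p (hd 0 xs) (tl xs)).
Proof.
  intros H0 HS E0 ES p [|n ys] L; simpl in *; [lia|].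
  induction n.
  - constructor. rewrite E0 by lia. apply H0. lia.
  - econstructor; [apply IHn|]. rewrite ES by lia. apply HS. simpl. lia.
Qed.

Ltac weaken H := eapply computes_weaken; [apply H | lia].

Ltac by_arity := let p := fresh "p" in let xs := fresh "xs" in let L := fresh "L" in
  intros p xs L; destruct xs; simpl in *; try lia; try reflexivity.

Definition prog_add := rfPrimRec (rfProj 0) (rfComp rfSucc [rfProj 1]).
Lemma computes_add : computes 2 prog_add (fun _ xs => nth 0 xs 0 + nth 1 xs 0).
Proof.
  eapply computes_ext.
  - eapply (computes_primrec 1 _ _ _ _ (fun _ n ys => n + nth 0 ys 0)).
    + apply computes_proj.
    + eapply computes_comp1; [apply computes_succ | weaken computes_proj].
    + reflexivity.
    + reflexivity.
  - by_arity.
Qed.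

Definition prog_pred := rfPrimRec rfZero (rfProj 0).
Lemma computes_pred : computes 1 prog_pred (fun _ xs => pred (nth 0 xs 0)).
Proof.
  eapply computes_ext.
  - eapply (computes_primrec 0 _ _ _ _ (fun _ n _ => pred n)).
    + apply computes_zero.
    + weaken computes_proj.
    + reflexivity.
    + reflexivity.
  - by_arity.
Qed.

(* [prog_sub] computes [y - x] on [x; y]: the recursion is on the first argument. *)
Definition prog_sub := rfPrimRec (rfProj 0) (rfComp prog_pred [rfProj 1]).
Lemma computes_sub : computes 2 prog_sub (fun _ xs => nth 1 xs 0 - nth 0 xs 0).
Proof.
  eapply computes_ext.
  - eapply (computes_primrec 1 _ _ _ _ (fun _ n ys => nth 0 ys 0 - n)).
    + apply computes_proj.
    + eapply computes_comp1; [apply computes_pred | weaken computes_proj].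
    + intros; simpl; lia.
    + intros; simpl; lia.
  - by_arity.
Qed.

Definition prog_one := rfComp rfSucc [rfZero].
Lemma computes_one : computes 0 prog_one (fun _ _ => 1).
Proof.
  eapply computes_ext; [eapply computes_comp1; [apply computes_succ | apply computes_zero]|].
  by_arity.
Qed.

Definition prog_ifz := rfPrimRec (rfProj 0) (rfProj 3).
Lemma computes_ifz : computes 3 prog_ifz
  (fun _ xs => match nth 0 xs 0 with 0 => nth 1 xs 0 | S _ => nth 2 xs 0 end).
Proof.
  eapply computes_ext.
  - eapply (computes_primrec 2 _ _ _ _
      (fun _ n ys => match n with 0 => nth 0 ys 0 | S _ => nth 1 ys 0 end)).
    + weaken computes_proj.
    + apply computes_proj.
    + reflexivity.
    + reflexivity.
  - by_arity.
Qed.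

Definition prog_isz := rfPrimRec prog_one rfZero.
Lemma computes_isz : computes 1 prog_isz
  (fun _ xs => match nth 0 xs 0 with 0 => 1 | S _ => 0 end).
Proof.
  eapply computes_ext.
  - eapply (computes_primrec 0 _ _ _ _ (fun _ n _ => match n with 0 => 1 | S _ => 0 end)).
    + apply computes_one.
    + weaken computes_zero.
    + reflexivity.
    + reflexivity.
  - by_arity.
Qed.

Definition prog_odd := rfPrimRec rfZero (rfComp prog_isz [rfProj 1]).
Lemma computes_odd : computes 1 prog_odd (fun _ xs => Nat.b2n (Nat.odd (nth 0 xs 0))).
Proof.
  eapply computes_ext.
  - eapply (computes_primrec 0 _ _ _ _ (fun _ n _ => Nat.b2n (Nat.odd n))).
    + apply computes_zero.
    + eapply computes_comp1; [apply computes_isz | weaken computes_proj].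
    + reflexivity.
    + intros; simpl. rewrite Nat.odd_succ, <- Nat.negb_odd.
      destruct (Nat.odd n); reflexivity.
  - by_arity.
Qed.

Lemma div2_succ m : Nat.div2 (S m) = Nat.div2 m + Nat.b2n (Nat.odd m).
Proof.
  pose proof (Nat.div2_odd m) as H1. pose proof (Nat.div2_odd (S m)) as H2.
  rewrite Nat.odd_succ, <- Nat.negb_odd in H2.
  destruct (Nat.odd m); simpl in *; lia.
Qed.

Definition prog_div2 :=
  rfPrimRec rfZero (rfComp prog_add [rfProj 1; rfComp prog_odd [rfProj 0]]).
Lemma computes_div2 : computes 1 prog_div2 (fun _ xs => Nat.div2 (nth 0 xs 0)).
Proof.
  eapply computes_ext.
  - eapply (computes_primrec 0 _ _ _ _ (fun _ n _ => Nat.div2 n)).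
    + apply computes_zero.
    + eapply computes_comp2; [apply computes_add | weaken computes_proj |].
      eapply computes_comp1; [apply computes_odd | weaken computes_proj].
    + reflexivity.
    + intros; simpl. apply div2_succ.
  - by_arity.
Qed.

Definition prog_double := rfComp prog_add [rfProj 0; rfProj 0].
Lemma computes_double : computes 1 prog_double (fun _ xs => 2 * nth 0 xs 0).
Proof.
  eapply computes_ext.
  - eapply computes_comp2; [apply computes_add | apply computes_proj | apply computes_proj].
  - intros; simpl; lia.
Qed.

Definition prog_leb := rfComp prog_isz [rfComp prog_sub [rfProj 1; rfProj 0]].
Lemma computes_leb : computes 2 prog_leb
  (fun _ xs => Nat.b2n (nth 0 xs 0 <=? nth 1 xs 0)).
Proof.
  eapply computes_ext.
  - eapply computes_comp1; [apply computes_isz|].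
    eapply computes_comp2; [apply computes_sub | apply computes_proj | weaken computes_proj].
  - intros p xs _; simpl.
    destruct (Nat.leb_spec (nth 0 xs 0) (nth 1 xs 0)).
    + replace (nth 0 xs 0 - nth 1 xs 0) with 0 by lia. reflexivity.
    + destruct (nth 0 xs 0 - nth 1 xs 0) eqn:E; [lia | reflexivity].
Qed.

(** * Inverting the Cantor pairing *)

Fixpoint triangle (s : nat) : nat := match s with 0 => 0 | S m => triangle m + S m end.

Lemma cpair_triangle i n : cpair i n = triangle (i + n) + n.
Proof.
  assert (H : forall s, 2 * triangle s = s * (s + 1)).
  { induction s; [reflexivity|]. cbn [triangle]. rewrite Nat.mul_add_distr_l, IHs. ring. }
  unfold cpair. rewrite <- H, Nat.mul_comm, Nat.div_mul by lia. reflexivity.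
Qed.

Lemma triangle_mono a b : a <= b -> triangle a <= triangle b.
Proof. induction 1; simpl; lia. Qed.

Lemma triangle_ge s : s <= triangle s.
Proof. induction s; simpl; lia. Qed.

(* [cdiag N] is the diagonal [i + n] of [N = cpair i n]: the number of [t] with
   [triangle (S t) <= N]; counting up to [N] suffices since [triangle] is unbounded. *)
Fixpoint count_triangles (j N : nat) : nat :=
  match j with 0 => 0 | S t => count_triangles t N + Nat.b2n (triangle (S t) <=? N) end.

Definition cdiag (N : nat) : nat := count_triangles N N.
Definition cpair_snd (N : nat) : nat := N - triangle (cdiag N).
Definition cpair_fst (N : nat) : nat := cdiag N - cpair_snd N.

Lemma count_triangles_spec s N j :
  (forall t, t < j -> (triangle (S t) <= N <-> t < s)) -> count_triangles j N = Nat.min j s.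
Proof.
  induction j; intros H; [reflexivity|].
  change (count_triangles (S j) N)
    with (count_triangles j N + Nat.b2n (triangle (S j) <=? N)).
  rewrite IHj by (intros; apply H; lia).
  destruct (Nat.leb_spec (triangle (S j)) N) as [h|h].
  - apply H in h; [cbn [Nat.b2n]; lia | lia].
  - assert (~ j < s) by (intro c; apply H in c; lia). cbn [Nat.b2n]. lia.
Qed.

Lemma cdiag_cpair i n : cdiag (cpair i n) = i + n.
Proof.
  rewrite cpair_triangle. unfold cdiag. rewrite (count_triangles_spec (i + n)).
  - pose proof (triangle_ge (i + n)). lia.
  - intros t _. split; intro h.
    + destruct (Nat.lt_ge_cases t (i + n)) as [|g]; auto.
      pose proof (triangle_mono (S (i + n)) (S t) ltac:(lia)). cbn [triangle] in *. lia.
    + pose proof (triangle_mono (S t) (i + n) ltac:(lia)). lia.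
Qed.

Lemma cpair_snd_cpair i n : cpair_snd (cpair i n) = n.
Proof. unfold cpair_snd. rewrite cdiag_cpair, cpair_triangle. lia. Qed.

Lemma cpair_fst_cpair i n : cpair_fst (cpair i n) = i.
Proof. unfold cpair_fst. rewrite cpair_snd_cpair, cdiag_cpair. lia. Qed.

Definition prog_triangle :=
  rfPrimRec rfZero (rfComp prog_add [rfProj 1; rfComp rfSucc [rfProj 0]]).
Lemma computes_triangle : computes 1 prog_triangle (fun _ xs => triangle (nth 0 xs 0)).
Proof.
  eapply computes_ext.
  - eapply (computes_primrec 0 _ _ _ _ (fun _ n _ => triangle n)).
    + apply computes_zero.
    + eapply computes_comp2; [apply computes_add | weaken computes_proj |].
      eapply computes_comp1; [apply computes_succ | weaken computes_proj].
    + reflexivity.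
    + reflexivity.
  - by_arity.
Qed.

Definition prog_cpair :=
  rfComp prog_add [rfComp prog_triangle [rfComp prog_add [rfProj 0; rfProj 1]]; rfProj 1].
Lemma computes_cpair : computes 2 prog_cpair (fun _ xs => cpair (nth 0 xs 0) (nth 1 xs 0)).
Proof.
  eapply computes_ext.
  - eapply computes_comp2; [apply computes_add | | apply computes_proj].
    eapply computes_comp1; [apply computes_triangle|].
    eapply computes_comp2; [apply computes_add | weaken computes_proj | apply computes_proj].
  - intros; simpl. rewrite cpair_triangle. reflexivity.
Qed.

Definition prog_count_triangles := rfPrimRec rfZero (rfComp prog_add [rfProj 1;
  rfComp prog_leb [rfComp prog_triangle [rfComp rfSucc [rfProj 0]]; rfProj 2]]).
Definition prog_cdiag := rfComp prog_count_triangles [rfProj 0; rfProj 0].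
Lemma computes_cdiag : computes 1 prog_cdiag (fun _ xs => cdiag (nth 0 xs 0)).
Proof.
  eapply computes_ext.
  - eapply computes_comp2; [| apply computes_proj | apply computes_proj].
    eapply (computes_primrec 1 _ _ _ _ (fun _ n ys => count_triangles n (nth 0 ys 0))).
    + weaken computes_zero.
    + eapply computes_comp2; [apply computes_add | weaken computes_proj |].
      eapply computes_comp2; [apply computes_leb | | apply computes_proj].
      eapply computes_comp1; [apply computes_triangle|].
      eapply computes_comp1; [apply computes_succ | weaken computes_proj].
    + reflexivity.
    + reflexivity.
  - by_arity.
Qed.

Definition prog_cpair_snd := rfComp prog_sub [rfComp prog_triangle [prog_cdiag]; rfProj 0].
Lemma computes_cpair_snd : computes 1 prog_cpair_snd (fun _ xs => cpair_snd (nth 0 xs 0)).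
Proof.
  eapply computes_ext.
  - eapply computes_comp2; [apply computes_sub | | apply computes_proj].
    eapply computes_comp1; [apply computes_triangle | apply computes_cdiag].
  - by_arity.
Qed.

Definition prog_cpair_fst := rfComp prog_sub [prog_cpair_snd; prog_cdiag].
Lemma computes_cpair_fst : computes 1 prog_cpair_fst (fun _ xs => cpair_fst (nth 0 xs 0)).
Proof.
  eapply computes_ext.
  - eapply computes_comp2; [apply computes_sub | apply computes_cpair_snd | apply computes_cdiag].
  - by_arity.
Qed.

(** * Closure properties of computable maps *)

Fixpoint plug (e eo : rf) : rf :=
  match e with
  | rfOracle => rfComp eo [rfProj 0]
  | rfComp f gs => rfComp (plug f eo) (map (fun g => plug g eo) gs)
  | rfPrimRec f g => rfPrimRec (plug f eo) (plug g eo)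
  | rfMu f => rfMu (plug f eo)
  | _ => e
  end.

(* The generated induction principle of [rf] has no hypothesis for the list of
   arguments of [rfComp]. *)
Section RfInduction.
Variable P : rf -> Prop.
Hypothesis Pzero : P rfZero.
Hypothesis Psucc : P rfSucc.
Hypothesis Pproj : forall i, P (rfProj i).
Hypothesis Poracle : P rfOracle.
Hypothesis Pcomp : forall f gs, P f -> Forall P gs -> P (rfComp f gs).
Hypothesis Pprimrec : forall f g, P f -> P g -> P (rfPrimRec f g).
Hypothesis Pmu : forall f, P f -> P (rfMu f).

Fixpoint rf_nested_ind (e : rf) : P e :=
  match e with
  | rfZero => Pzero | rfSucc => Psucc | rfProj i => Pproj i | rfOracle => Poracle
  | rfComp f gs => Pcomp f gs (rf_nested_ind f)
      ((fix all l := match l return Forall P l with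
                     | [] => Forall_nil _
                     | g :: l' => Forall_cons _ (rf_nested_ind g) (all l') end) gs)
  | rfPrimRec f g => Pprimrec f g (rf_nested_ind f) (rf_nested_ind g)
  | rfMu f => Pmu f (rf_nested_ind f)
  end.
End RfInduction.

Lemma eval_plug (p q : baire) (eo : rf) : (forall n, eval p eo [n] (q n)) ->
  forall e xs v, eval q e xs v -> eval p (plug e eo) xs v.
Proof.
  intros Heo e. induction e as [| | | |f gs IHf IHgs|f g IHf IHg|f IHf] using rf_nested_ind;
    intros xs v Hev; simpl.
  - inversion Hev; subst. constructor.
  - inversion Hev; subst. constructor.
  - inversion Hev; subst. constructor; assumption.
  - inversion Hev; subst. econstructor; [repeat constructor | apply Heo].
  - inversion Hev as [| | | |? ? ? ys ? Hl Hf| | |]; subst.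
    econstructor; [clear Hev Hf; induction Hl | eauto].
    + constructor.
    + inversion IHgs; subst. constructor; auto.
  - destruct xs as [|n xs]; [inversion Hev|].
    revert v Hev. induction n; intros v Hev; inversion Hev; subst; econstructor; eauto.
  - inversion Hev as [| | | | | | |? ? ? Hz Hlt]; subst. constructor; auto.
    intros m Hm. destruct (Hlt m Hm) as [k Hk]. eauto.
Qed.

Lemma computable_pcomp (F G : pfun) : computable F -> computable G -> computable (pcomp F G).
Proof.
  intros [eF HF] [eG HG]. exists (plug eF eG). intros p r E n. unfold pcomp in E.
  destruct (G p) as [q|] eqn:Gp; [|discriminate].
  apply (eval_plug p q); [apply HG, Gp | apply HF, E].
Qed.

Definition pointwise (f : baire -> baire) : pfun := fun p => Some (f p).

Lemma computable_pointwise e (f : baire -> baire) :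
  computes 1 e (fun p xs => f p (nth 0 xs 0)) -> computable (pointwise f).
Proof.
  intros He. exists e. intros p q E n. injection E as <-. apply (He p [n]). simpl. lia.
Qed.

Definition pjoin (F G : pfun) : pfun :=
  fun p => match F p, G p with Some a, Some b => Some (join a b) | _, _ => None end.

Lemma join_even_odd (a b : baire) n :
  join a b n = match Nat.b2n (Nat.odd n) with 0 => a (Nat.div2 n) | S _ => b (Nat.div2 n) end.
Proof. unfold join. rewrite <- Nat.negb_odd. destruct (Nat.odd n); reflexivity. Qed.

Lemma computable_pjoin (F G : pfun) : computable F -> computable G -> computable (pjoin F G).
Proof.
  intros [eF HF] [eG HG].
  exists (rfComp prog_ifz [prog_odd; rfComp eF [prog_div2]; rfComp eG [prog_div2]]).
  intros p r E n. unfold pjoin in E.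
  destruct (F p) as [a|] eqn:Fp; [|discriminate].
  destruct (G p) as [b|] eqn:Gp; [|discriminate].
  injection E as <-. rewrite join_even_odd.
  assert (Hdiv2 : eval p prog_div2 [n] (Nat.div2 n)) by (apply (computes_div2 p [n]); simpl; lia).
  econstructor; [repeat econstructor | apply (computes_ifz p [_; _; _]); simpl; lia].
  - apply (computes_odd p [n]). simpl. lia.
  - exact Hdiv2.
  - apply HF, Fp.
  - exact Hdiv2.
  - apply HG, Gp.
Qed.

(** * Plays *)

Definition move (d : turnfun) (s1 s2 : strategy) (h : word) : bool :=
  if d h then s1 h else s2 h.

Lemma prefix_succ n x : prefix (S n) x = prefix n x ++ [x n].
Proof. unfold prefix. rewrite seq_S, map_app. reflexivity. Qed.

Lemma prefix_spec n x w : length w = n -> (forall i, i < n -> x i = nth i w false) ->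
  prefix n x = w.
Proof.
  intros Lw Hx. apply nth_ext with false false; unfold prefix.
  - rewrite length_map, length_seq. auto.
  - intros i Hi. rewrite length_map, length_seq in Hi.
    rewrite nth_indep with (d' := x 0) by (rewrite length_map, length_seq; exact Hi).
    rewrite map_nth, seq_nth by exact Hi. apply Hx, Hi.
Qed.

Lemma history_prefix d s1 s2 n : history d s1 s2 n = prefix n (play d s1 s2).
Proof.
  induction n; [reflexivity|].
  cbn [history]. rewrite prefix_succ, <- IHn. reflexivity.
Qed.

Lemma play_unfold d s1 s2 n :
  play d s1 s2 n = move d s1 s2 (prefix n (play d s1 s2)).
Proof. unfold play at 1. rewrite history_prefix. reflexivity. Qed.

Lemma play_unique d s1 s2 (x : cantor) :
  (forall n, x n = move d s1 s2 (prefix n x)) -> play d s1 s2 = x.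
Proof.
  intros Hx.
  assert (Hh : forall n, history d s1 s2 n = prefix n x).
  { induction n; [reflexivity|]. cbn [history]. rewrite prefix_succ, IHn, (Hx n). reflexivity. }
  extensionality n. unfold play. rewrite Hh. symmetry. apply Hx.
Qed.

Lemma prepend_lt w z i : i < length w -> prepend w z i = nth i w false.
Proof. intros Hi. unfold prepend. apply Nat.ltb_lt in Hi. rewrite Hi. reflexivity. Qed.

Lemma prepend_length_add w z j : prepend w z (length w + j) = z j.
Proof.
  unfold prepend. replace (length w + j <? length w) with false
    by (symmetry; apply Nat.ltb_ge; lia).
  f_equal. lia.
Qed.

Lemma shift_prepend w z : shift (length w) (prepend w z) = z.
Proof. extensionality j. apply prepend_length_add. Qed.

Lemma prepend_app u v z : prepend (u ++ v) z = prepend u (prepend v z).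
Proof.
  extensionality i. unfold prepend. rewrite length_app.
  destruct (Nat.ltb_spec i (length u)), (Nat.ltb_spec i (length u + length v)),
    (Nat.ltb_spec (i - length u) (length v)); try lia;
    first [apply app_nth1 | apply app_nth2 | f_equal]; lia.
Qed.

Lemma prefix_prepend w z j : prefix (length w + j) (prepend w z) = w ++ prefix j z.
Proof.
  apply prefix_spec; [rewrite length_app; unfold prefix; rewrite length_map, length_seq; lia|].
  intros i Hi. destruct (Nat.lt_ge_cases i (length w)).
  - rewrite prepend_lt, app_nth1 by assumption. reflexivity.
  - rewrite app_nth2 by assumption. unfold prefix.
    replace i with (length w + (i - length w)) at 1 by lia.
    rewrite prepend_length_add.
    rewrite nth_indep with (d' := z 0) by (rewrite length_map, length_seq; lia).
    rewrite map_nth, seq_nth by lia. reflexivity.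
Qed.

(** * The combined game *)

Lemma tree_op_branch As n y :
  tree_op As (prepend (repeat true n ++ [false]) y) <->
  (n = 0 /\ forall k, y k = true) \/ As n y.
Proof.
  set (x := prepend (repeat true n ++ [false]) y).
  assert (Lw : length (repeat true n ++ [false]) = S n)
    by (rewrite length_app, repeat_length; simpl; lia).
  assert (Xt : forall i, i < n -> x i = true).
  { intros i Hi. unfold x. rewrite prepend_lt by lia.
    rewrite app_nth1 by (rewrite repeat_length; lia). apply nth_repeat_lt, Hi. }
  assert (Xf : x n = false).
  { unfold x. rewrite prepend_lt by lia.
    rewrite app_nth2 by (rewrite repeat_length; lia). rewrite repeat_length, Nat.sub_diag.
    reflexivity. }
  assert (Xs : shift (S n) x = y) by (rewrite <- Lw; apply shift_prepend).
  unfold tree_op. split.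
  - intros [[X0 X1]|[n' [H1 [H2 H3]]]].
    + destruct n; [|rewrite Xt in X0 by lia; discriminate].
      left. split; [reflexivity|]. intros k. rewrite <- Xs. apply X1.
    + assert (n' = n) as ->.
      { destruct (Nat.lt_trichotomy n' n) as [h|[h|h]]; auto.
        - rewrite Xt in H2 by exact h. discriminate.
        - rewrite H1 in Xf by exact h. discriminate. }
      right. rewrite <- Xs. exact H3.
  - intros [[-> Y]|HA].
    + left. split; [exact Xf|]. intros k. rewrite <- Xs in Y. apply Y.
    + right. exists n. rewrite Xs. auto.
Qed.

(* On sequences starting with [0], [comb_set As] is [{0 1^N} ∪ ⋃_m 0 1^m 0 As m];
   player 1 moves first and never opens with [1]. *)
Definition comb_set (As : nat -> cantor -> Prop) : cantor -> Prop :=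
  tree_op (fun _ => unscale ([true], tree_op (fun m => As (pred m)))).

Definition branch_word (m : nat) : word := false :: repeat true m ++ [false].

Lemma comb_set_branch As m y : comb_set As (prepend (branch_word m) y) <-> As m y.
Proof.
  unfold comb_set, branch_word.
  change (false :: repeat true m ++ [false])
    with ((repeat true 0 ++ [false]) ++ repeat true m ++ [false]).
  rewrite prepend_app, tree_op_branch. unfold unscale. simpl fst. simpl snd.
  rewrite <- prepend_app.
  change ([true] ++ repeat true m ++ [false]) with (repeat true (S m) ++ [false]).
  rewrite tree_op_branch.
  split.
  - intros [[_ Y]|[[H _]|HA]]; [|discriminate|exact HA].
    exfalso. specialize (Y m).
    rewrite prepend_lt in Y by (rewrite length_app, repeat_length; simpl; lia).
    rewrite app_nth2 in Y by (rewrite repeat_length; lia).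
    rewrite repeat_length, Nat.sub_diag in Y. discriminate.
  - intros HA. right. right. exact HA.
Qed.

Lemma comb_set_zero_ones As : comb_set As (prepend [false] (fun _ => true)).
Proof. left. split; reflexivity. Qed.

Lemma not_comb_set_ones As : ~ comb_set As (fun _ => true).
Proof. intros [[H _]|[n [_ [H _]]]]; discriminate. Qed.

Fixpoint route (leaf : nat -> bool) (branch : nat -> word -> bool) (j : nat) (w : word) : bool :=
  match w with
  | [] => leaf j
  | true :: w' => route leaf branch (S j) w'
  | false :: w' => branch j w'
  end.

Lemma route_trues leaf branch j k r :
  route leaf branch j (repeat true k ++ r) = route leaf branch (j + k) r.
Proof.
  revert j. induction k; intros j; simpl; [rewrite Nat.add_0_r; reflexivity|].
  rewrite IHk. f_equal. lia.
Qed.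

Lemma route_leaf leaf branch k : route leaf branch 0 (repeat true k) = leaf k.
Proof. rewrite <- (app_nil_r (repeat true k)), route_trues. reflexivity. Qed.

Lemma route_branch leaf branch m h :
  route leaf branch 0 (repeat true m ++ false :: h) = branch m h.
Proof. rewrite route_trues. reflexivity. Qed.

Definition comb_turn (D : nat -> turnfun) (w : word) : bool :=
  match w with
  | [] => true
  | true :: _ => false
  | false :: w' => route (fun _ => false) D 0 w'
  end.

Definition comb_strategy (S1 : nat -> strategy) (w : word) : bool :=
  match w with false :: w' => route (fun _ => false) S1 0 w' | _ => false end.

Definition branch_strategy (m : nat) (s : strategy) : strategy :=
  fun h => s (false :: repeat true m ++ false :: h).

Lemma prefix_const k (b : bool) : prefix k (fun _ => b) = repeat b k.
Proof.
  apply prefix_spec; [apply repeat_length|]. intros i Hi. symmetry. apply nth_repeat_lt, Hi.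
Qed.

Lemma play_comb_ones D s t : s [] = true -> (forall w, t (true :: w) = true) ->
  play (comb_turn D) s t = (fun _ => true).
Proof.
  intros Hs Ht. apply play_unique. intros n. rewrite prefix_const. unfold move.
  destruct n; simpl; [rewrite Hs | rewrite Ht]; reflexivity.
Qed.

Lemma branch_word_app m h : branch_word m ++ h = false :: repeat true m ++ false :: h.
Proof. unfold branch_word. simpl. rewrite <- app_assoc. reflexivity. Qed.

Lemma branch_word_length m : length (branch_word m) = S (S m).
Proof. unfold branch_word. simpl. rewrite length_app, repeat_length. simpl. lia. Qed.

Lemma nth_branch_word m k : k <= m -> nth (S k) (branch_word m) false = (k <? m).
Proof.
  intros Hk. unfold branch_word. cbn [nth]. destruct (Nat.ltb_spec k m).
  - rewrite app_nth1 by (rewrite repeat_length; lia). apply nth_repeat_lt. assumption.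
  - rewrite app_nth2 by (rewrite repeat_length; lia).
    rewrite repeat_length. replace (k - m) with 0 by lia. reflexivity.
Qed.

Lemma prefix_branch m k y : k <= m ->
  prefix (S k) (prepend (branch_word m) y) = false :: repeat true k.
Proof.
  intros Hk. apply prefix_spec; [simpl; rewrite repeat_length; reflexivity|].
  intros [|i] Hi; rewrite prepend_lt by (rewrite branch_word_length; lia); [reflexivity|].
  rewrite nth_branch_word by lia. cbn [nth]. rewrite nth_repeat_lt by lia.
  apply Nat.ltb_lt. lia.
Qed.

Lemma play_comb_zero_ones D s t : s [] = false ->
  (forall k, t (false :: repeat true k) = true) ->
  play (comb_turn D) s t = prepend [false] (fun _ => true).
Proof.
  intros Hs Ht. apply play_unique. intros [|k].
  { unfold move, prefix. simpl. rewrite Hs. reflexivity. }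
  change (S k) with (length [false] + k).
  rewrite prefix_prepend, prefix_const, prepend_length_add.
  unfold move. simpl. rewrite route_leaf, Ht. reflexivity.
Qed.

Lemma play_comb_branch D s t m : s [] = false ->
  (forall k, k < m -> t (false :: repeat true k) = true) ->
  t (false :: repeat true m) = false ->
  play (comb_turn D) s t =
  prepend (branch_word m) (play (D m) (branch_strategy m s) (branch_strategy m t)).
Proof.
  intros Hs Hlt Hm. set (y := play (D m) _ _). apply play_unique. intros n.
  destruct (Nat.lt_ge_cases n (S (S m))) as [Hn|Hn].
  - rewrite prepend_lt by (rewrite branch_word_length; exact Hn).
    destruct n as [|k]; [unfold move, prefix; simpl; rewrite Hs; reflexivity|].
    rewrite prefix_branch, nth_branch_word by lia. unfold move. simpl. rewrite route_leaf.
    destruct (Nat.ltb_spec k m); [rewrite Hlt | replace k with m by lia; rewrite Hm]; auto.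
  - replace n with (length (branch_word m) + (n - S (S m)))
      by (rewrite branch_word_length; lia).
    rewrite prepend_length_add, prefix_prepend, branch_word_app.
    unfold y at 1. rewrite play_unfold. fold y. unfold move. simpl. rewrite route_branch.
    reflexivity.
Qed.

Lemma branch_comb_strategy S1 m : branch_strategy m (comb_strategy S1) = S1 m.
Proof. extensionality h. unfold branch_strategy. simpl. apply route_branch. Qed.

Lemma comb_strategy_winning D As S1 :
  (forall m, winning1 (D m) (As m) (S1 m)) ->
  winning1 (comb_turn D) (comb_set As) (comb_strategy S1).
Proof.
  intros W t. destruct (classic (forall k, t (false :: repeat true k) = true)) as [Hall|Hex].
  - rewrite play_comb_zero_ones by auto. apply comb_set_zero_ones.
  - assert (Hdec : forall k, {t (false :: repeat true k) = false} +
                             {t (false :: repeat true k) <> false})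
      by (intros; apply bool_dec).
    destruct (epsilon_smallest _ Hdec) as [m [Hm Hmin]].
    { apply not_all_ex_not in Hex as [k Hk]. exists k. apply not_true_is_false, Hk. }
    rewrite (play_comb_branch D _ _ m), branch_comb_strategy; [| reflexivity | | exact Hm].
    + apply comb_set_branch, W.
    + intros k Hk. apply not_false_is_true. intros Hf. specialize (Hmin k Hf). lia.
Qed.

Lemma branch_strategy_winning D As s :
  winning1 (comb_turn D) (comb_set As) s ->
  forall m, winning1 (D m) (As m) (branch_strategy m s).
Proof.
  intros W m t.
  assert (Hs : s [] = false).
  { destruct (s []) eqn:E; [|reflexivity]. exfalso. apply (not_comb_set_ones As).
    rewrite <- (play_comb_ones D s (fun _ => true)); auto. }
  (* Player 2 walks into branch [m] and then answers with [t]. *)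
  set (T := fun w => match w with
                     | false :: w' => route (fun k => k <? m) (fun _ => t) 0 w'
                     | _ => true end).
  assert (HT : branch_strategy m T = t)
    by (extensionality h; unfold branch_strategy, T; apply route_branch).
  rewrite <- HT. apply comb_set_branch. rewrite <- play_comb_branch; auto.
  - intros k Hk. unfold T. rewrite route_leaf. apply Nat.ltb_lt, Hk.
  - unfold T. rewrite route_leaf. apply Nat.ltb_irrefl.
Qed.

(** * A name of the combined turn function *)

Lemma odd_double_plus_1 k : Nat.odd (2 * k + 1) = true.
Proof. apply Nat.odd_odd. Qed.

Lemma div2_double_plus_1 k : Nat.div2 (2 * k + 1) = k.
Proof. replace (2 * k + 1) with (S (2 * k)) by lia. apply Nat.div2_succ_double. Qed.

Lemma odd_double_plus_2 k : Nat.odd (2 * k + 2) = false.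
Proof. replace (2 * k + 2) with (2 * (k + 1)) by lia. apply Nat.odd_even. Qed.

Lemma div2_double_plus_2 k : Nat.div2 (2 * k + 2) = k + 1.
Proof. replace (2 * k + 2) with (2 * (k + 1)) by lia. apply Nat.div2_double. Qed.

(* On codes of words, [drop_true] removes a leading [true] and fixes all other codes,
   and [heads_true] tests for a leading [true]. *)
Definition drop_true (c : nat) : nat :=
  match c with 0 => 0 | S _ => if Nat.odd c then c else pred (Nat.div2 c) end.

Definition heads_true (c : nat) : nat :=
  match c with 0 => 0 | S _ => if Nat.odd c then 0 else 1 end.

Fixpoint count_trues (j c : nat) : nat :=
  match j with 0 => 0 | S t => count_trues t c + heads_true (Nat.iter t drop_true c) end.

Lemma drop_true_true w : drop_true (wcode (true :: w)) = wcode w.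
Proof.
  change (wcode (true :: w)) with (2 * wcode w + 2). unfold drop_true.
  destruct (2 * wcode w + 2) eqn:E; [lia|].
  rewrite <- E, odd_double_plus_2, div2_double_plus_2. lia.
Qed.

Lemma drop_true_not_true r : hd false r = false -> drop_true (wcode r) = wcode r.
Proof.
  destruct r as [|[] w]; intros H; [reflexivity|discriminate|].
  change (wcode (false :: w)) with (2 * wcode w + 1). unfold drop_true.
  destruct (2 * wcode w + 1) eqn:E; [lia|]. rewrite <- E, odd_double_plus_1. reflexivity.
Qed.

Lemma heads_true_spec r : heads_true (wcode r) = Nat.b2n (hd false r).
Proof.
  destruct r as [|[] w]; [reflexivity| |].
  - change (wcode (true :: w)) with (2 * wcode w + 2). unfold heads_true.
    destruct (2 * wcode w + 2) eqn:E; [lia|]. rewrite <- E, odd_double_plus_2. reflexivity.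
  - change (wcode (false :: w)) with (2 * wcode w + 1). unfold heads_true.
    destruct (2 * wcode w + 1) eqn:E; [lia|]. rewrite <- E, odd_double_plus_1. reflexivity.
Qed.

Lemma split_trues v : exists m r, v = repeat true m ++ r /\ hd false r = false.
Proof.
  induction v as [|[] v [m [r [-> Hr]]]].
  - exists 0, []. auto.
  - exists (S m), r. auto.
  - exists 0, (false :: repeat true m ++ r). auto.
Qed.

Section LeadingTrues.
Variables (m : nat) (r : word).
Hypothesis Hr : hd false r = false.

Lemma iter_drop_true j :
  Nat.iter j drop_true (wcode (repeat true m ++ r)) = wcode (repeat true (m - j) ++ r).
Proof.
  induction j; [rewrite Nat.sub_0_r; reflexivity|].
  rewrite Nat.iter_succ, IHj. destruct (m - j) as [|k] eqn:E.
  - replace (m - S j) with 0 by lia. apply drop_true_not_true, Hr.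
  - replace (m - S j) with k by lia. apply drop_true_true.
Qed.

Lemma count_trues_trues j : count_trues j (wcode (repeat true m ++ r)) = Nat.min j m.
Proof.
  induction j; [reflexivity|]. cbn [count_trues].
  rewrite IHj, iter_drop_true, heads_true_spec.
  destruct (m - j) eqn:E; cbn [repeat app hd]; [rewrite Hr|]; cbn [Nat.b2n]; lia.
Qed.

Lemma wcode_trues_ge : m <= wcode (repeat true m ++ r).
Proof. clear Hr. induction m; [lia|]. simpl. lia. Qed.

End LeadingTrues.

Definition branch_turn_code (p : baire) (v : nat) : nat :=
  match Nat.iter v drop_true v with
  | 0 => 1
  | S _ => p (cpair (count_trues v v) (2 * Nat.div2 (Nat.iter v drop_true v)))
  end.

Definition comb_turn_code (p : baire) (c : nat) : nat :=
  match c with 0 => 0 | S _ => if Nat.odd c then branch_turn_code p (Nat.div2 c) else 1 end.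

Lemma comb_turn_code_branch p m r : hd false r = false ->
  comb_turn_code p (wcode (false :: repeat true m ++ r)) =
  match r with [] => 1 | _ :: h => p (cpair m (2 * wcode h)) end.
Proof.
  intros Hr. change (wcode (false :: ?w)) with (2 * wcode w + 1). unfold comb_turn_code.
  destruct (2 * wcode (repeat true m ++ r) + 1) eqn:E; [lia|].
  rewrite <- E, odd_double_plus_1, div2_double_plus_1. unfold branch_turn_code.
  pose proof (wcode_trues_ge m r).
  rewrite iter_drop_true, count_trues_trues by exact Hr.
  replace (m - wcode (repeat true m ++ r)) with 0 by lia.
  replace (Nat.min (wcode (repeat true m ++ r)) m) with m by lia.
  destruct r as [|[] h]; [reflexivity|discriminate|].
  cbn [repeat app]. replace (wcode (false :: h)) with (S (2 * wcode h)) by (simpl; lia).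
  rewrite Nat.div2_succ_double. reflexivity.
Qed.

Lemma comb_turn_code_spec (p : baire) (D : nat -> turnfun) :
  (forall m w, D m w = (p (cpair m (2 * wcode w)) =? 0)) ->
  forall w, comb_turn D w = (comb_turn_code p (wcode w) =? 0).
Proof.
  intros HD [|[] v]; [reflexivity| |].
  - change (wcode (true :: v)) with (2 * wcode v + 2). unfold comb_turn_code.
    destruct (2 * wcode v + 2) eqn:E; [lia|]. rewrite <- E, odd_double_plus_2. reflexivity.
  - destruct (split_trues v) as [m [r [-> Hr]]].
    rewrite comb_turn_code_branch by exact Hr.
    destruct r as [|[] h]; [|discriminate|].
    + rewrite app_nil_r. simpl. rewrite route_leaf. reflexivity.
    + simpl. rewrite route_branch. apply HD.
Qed.

Definition prog_drop_true := rfComp prog_ifz [rfProj 0; rfZero;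
  rfComp prog_ifz [prog_odd; rfComp prog_pred [prog_div2]; rfProj 0]].
Lemma computes_drop_true : computes 1 prog_drop_true (fun _ xs => drop_true (nth 0 xs 0)).
Proof.
  eapply computes_ext.
  - eapply computes_comp3; [apply computes_ifz | apply computes_proj | weaken computes_zero |].
    eapply computes_comp3; [apply computes_ifz | apply computes_odd | | apply computes_proj].
    eapply computes_comp1; [apply computes_pred | apply computes_div2].
  - intros p xs _. simpl. unfold drop_true. destruct (nth 0 xs 0) as [|c]; [reflexivity|].
    destruct (Nat.odd (S c)); reflexivity.
Qed.

Definition prog_iter_drop_true := rfPrimRec (rfProj 0) (rfComp prog_drop_true [rfProj 1]).
Lemma computes_iter_drop_true : computes 2 prog_iter_drop_true
  (fun _ xs => Nat.iter (nth 0 xs 0) drop_true (nth 1 xs 0)).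
Proof.
  eapply computes_ext.
  - eapply (computes_primrec 1 _ _ _ _ (fun _ n ys => Nat.iter n drop_true (nth 0 ys 0))).
    + apply computes_proj.
    + eapply computes_comp1; [apply computes_drop_true | weaken computes_proj].
    + reflexivity.
    + reflexivity.
  - by_arity.
Qed.

Definition prog_heads_true := rfComp prog_ifz [rfProj 0; rfZero; rfComp prog_isz [prog_odd]].
Lemma computes_heads_true : computes 1 prog_heads_true (fun _ xs => heads_true (nth 0 xs 0)).
Proof.
  eapply computes_ext.
  - eapply computes_comp3; [apply computes_ifz | apply computes_proj | weaken computes_zero |].
    eapply computes_comp1; [apply computes_isz | apply computes_odd].
  - intros p xs _. simpl. unfold heads_true. destruct (nth 0 xs 0) as [|c]; [reflexivity|].
    destruct (Nat.odd (S c)); reflexivity.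
Qed.

Definition prog_count_trues := rfPrimRec rfZero (rfComp prog_add [rfProj 1;
  rfComp prog_heads_true [rfComp prog_iter_drop_true [rfProj 0; rfProj 2]]]).
Lemma computes_count_trues : computes 2 prog_count_trues
  (fun _ xs => count_trues (nth 0 xs 0) (nth 1 xs 0)).
Proof.
  eapply computes_ext.
  - eapply (computes_primrec 1 _ _ _ _ (fun _ n ys => count_trues n (nth 0 ys 0))).
    + weaken computes_zero.
    + eapply computes_comp2; [apply computes_add | weaken computes_proj |].
      eapply computes_comp1; [apply computes_heads_true|].
      eapply computes_comp2;
        [apply computes_iter_drop_true | weaken computes_proj | apply computes_proj].
    + reflexivity.
    + reflexivity.
  - by_arity.
Qed.

Definition prog_branch_turn_code :=
  let drops := rfComp prog_iter_drop_true [rfProj 0; rfProj 0] in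
  rfComp prog_ifz [drops; prog_one; rfComp rfOracle [rfComp prog_cpair
    [rfComp prog_count_trues [rfProj 0; rfProj 0]; rfComp prog_double [rfComp prog_div2 [drops]]]]].
Lemma computes_branch_turn_code : computes 1 prog_branch_turn_code
  (fun p xs => branch_turn_code p (nth 0 xs 0)).
Proof.
  assert (Hdrops : computes 1 (rfComp prog_iter_drop_true [rfProj 0; rfProj 0])
    (fun _ xs => Nat.iter (nth 0 xs 0) drop_true (nth 0 xs 0))).
  { eapply computes_ext; [eapply computes_comp2;
      [apply computes_iter_drop_true | apply computes_proj | apply computes_proj] | by_arity]. }
  eapply computes_ext.
  - eapply computes_comp3; [apply computes_ifz | apply Hdrops | weaken computes_one |].
    eapply computes_comp1; [apply computes_oracle|].
    eapply computes_comp2; [apply computes_cpair | |].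
    + eapply computes_comp2;
        [apply computes_count_trues | apply computes_proj | apply computes_proj].
    + eapply computes_comp1; [apply computes_double|].
      eapply computes_comp1; [apply computes_div2 | apply Hdrops].
  - by_arity.
Qed.

Definition prog_comb_turn_code := rfComp prog_ifz [rfProj 0; rfZero;
  rfComp prog_ifz [prog_odd; prog_one; rfComp prog_branch_turn_code [prog_div2]]].
Lemma computes_comb_turn_code : computes 1 prog_comb_turn_code
  (fun p xs => comb_turn_code p (nth 0 xs 0)).
Proof.
  eapply computes_ext.
  - eapply computes_comp3; [apply computes_ifz | apply computes_proj | weaken computes_zero |].
    eapply computes_comp3; [apply computes_ifz | apply computes_odd | weaken computes_one |].
    eapply computes_comp1; [apply computes_branch_turn_code | apply computes_div2].
  - intros p xs _. simpl. unfold comb_turn_code. destruct (nth 0 xs 0) as [|c]; [reflexivity|].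
    destruct (Nat.odd (S c)); reflexivity.
Qed.

Definition branch_code (m c : nat) : nat :=
  2 * Nat.iter m (fun u => 2 * u + 2) (2 * c + 1) + 1.

Lemma branch_code_wcode m h :
  branch_code m (wcode h) = wcode (false :: repeat true m ++ false :: h).
Proof.
  assert (Hiter : forall v, Nat.iter m (fun u => 2 * u + 2) (wcode v) = wcode (repeat true m ++ v)).
  { intros v. induction m; [reflexivity|]. rewrite Nat.iter_succ, IHm. reflexivity. }
  unfold branch_code. change (2 * wcode h + 1) with (wcode (false :: h)).
  rewrite Hiter. reflexivity.
Qed.

Definition prog_branch_code := rfComp rfSucc [rfComp prog_double [rfPrimRec
  (rfComp rfSucc [rfComp prog_double [rfProj 0]])
  (rfComp rfSucc [rfComp rfSucc [rfComp prog_double [rfProj 1]]])]].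
Lemma computes_branch_code : computes 2 prog_branch_code
  (fun _ xs => branch_code (nth 0 xs 0) (nth 1 xs 0)).
Proof.
  eapply computes_ext.
  - eapply computes_comp1; [apply computes_succ|].
    eapply computes_comp1; [apply computes_double|].
    eapply (computes_primrec 1 _ _ _ _
      (fun _ n ys => Nat.iter n (fun u => 2 * u + 2) (2 * nth 0 ys 0 + 1))).
    + eapply computes_comp1; [apply computes_succ|].
      eapply computes_comp1; [apply computes_double | apply computes_proj].
    + eapply computes_comp1; [apply computes_succ|].
      eapply computes_comp1; [apply computes_succ|].
      eapply computes_comp1; [apply computes_double | weaken computes_proj].
    + intros; simpl; lia.
    + intros. rewrite Nat.iter_succ. cbn [nth]. lia.
  - intros p [|a xs] L; [simpl in L; lia|]. cbn [hd tl nth]. unfold branch_code. lia.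
Qed.

(** * The two reductions *)

Lemma join_double_plus_1 p q k : join p q (2 * k + 1) = q k.
Proof. unfold join. rewrite Nat.even_odd, div2_double_plus_1. reflexivity. Qed.

Lemma lhalf_join p q : lhalf (join p q) = p.
Proof.
  extensionality k. unfold lhalf, join. rewrite Nat.even_even, Nat.div2_double. reflexivity.
Qed.

Lemma rhalf_join p q : rhalf (join p q) = q.
Proof. extensionality k. apply join_double_plus_1. Qed.

Definition read_answer (f : nat -> nat) (J : baire) : baire := fun n => J (2 * f n + 1).

Lemma read_answer_join f p q : read_answer f (join p q) = fun n => q (f n).
Proof. extensionality n. apply join_double_plus_1. Qed.

Lemma computable_read_answer e f : computes 1 e (fun _ xs => f (nth 0 xs 0)) ->
  computable (pointwise (read_answer f)).
Proof.
  intros He. apply (computable_pointwise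
    (rfComp rfOracle [rfComp rfSucc [rfComp prog_double [e]]])).
  eapply computes_ext.
  - eapply computes_comp1; [apply computes_oracle|].
    eapply computes_comp1; [apply computes_succ|].
    eapply computes_comp1; [apply computes_double | apply He].
  - intros; simpl. unfold read_answer. f_equal. lia.
Qed.

Definition seq_const (q : baire) : baire := fun N => q (cpair_snd N).

Lemma component_seq_const q i : component (seq_const q) i = q.
Proof. extensionality n. unfold component, seq_const. rewrite cpair_snd_cpair. reflexivity. Qed.

Lemma computable_seq_const : computable (pointwise seq_const).
Proof.
  apply (computable_pointwise (rfComp rfOracle [prog_cpair_snd])).
  eapply computes_ext;
    [eapply computes_comp1; [apply computes_oracle | apply computes_cpair_snd] | reflexivity].
Qed.

Lemma FindWS_le_parallelization nm : weihrauch_le (FindWS nm) (parallelization (FindWS nm)).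
Proof.
  exists (pointwise (read_answer (cpair 0))), (pointwise seq_const).
  split; [|split; [apply computable_seq_const|]].
  - apply (computable_read_answer (rfComp prog_cpair [rfZero; rfProj 0])).
    eapply computes_ext;
      [eapply computes_comp2; [apply computes_cpair | weaken computes_zero | apply computes_proj]
      | by_arity].
  - intros G HG p x Hpx [s Hs].
    destruct (HG (seq_const p) (fun _ => x)) as [q [Gq [ys [Hys Hpar]]]].
    + intros i. simpl. rewrite component_seq_const. exact Hpx.
    + exists (fun _ => s). intros i. exact Hs.
    + exists (fun n => q (cpair 0 n)). split.
      * unfold pcomp, pointwise. rewrite Gq, read_answer_join. reflexivity.
      * exists (ys 0). split; [apply (Hys 0) | apply (Hpar 0)].
Qed.

Definition shifted_sets (p : baire) : baire :=
  fun N => p (cpair (pred (cpair_fst N)) (2 * cpair_snd N + 1)).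

Lemma component_shifted_sets p i : component (shifted_sets p) i = rhalf (component p (pred i)).
Proof.
  extensionality n. unfold component, shifted_sets, rhalf.
  rewrite cpair_fst_cpair, cpair_snd_cpair. reflexivity.
Qed.

Definition comb_game_namer (Ft Fu : pfun) : pfun :=
  pjoin (pointwise comb_turn_code)
    (pcomp Ft (pcomp (pointwise seq_const)
      (pcomp Fu (pcomp (pjoin (pointwise (fun _ _ => 1)) (pointwise (fun q => q)))
        (pcomp Ft (pointwise shifted_sets)))))).

Lemma computable_comb_game_namer Ft Fu : computable Ft -> computable Fu ->
  computable (comb_game_namer Ft Fu).
Proof.
  intros cFt cFu.
  repeat first [apply computable_pjoin | apply computable_pcomp | assumption
               | apply computable_seq_const].
  - apply (computable_pointwise prog_comb_turn_code), computes_comb_turn_code.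
  - apply (computable_pointwise prog_one). weaken computes_one.
  - apply (computable_pointwise rfOracle), computes_oracle.
  - apply (computable_pointwise
      (rfComp rfOracle [rfComp prog_cpair [rfComp prog_pred [prog_cpair_fst];
         rfComp rfSucc [rfComp prog_double [prog_cpair_snd]]]])).
    eapply computes_ext.
    + eapply computes_comp1; [apply computes_oracle|].
      eapply computes_comp2; [apply computes_cpair | |].
      * eapply computes_comp1; [apply computes_pred | apply computes_cpair_fst].
      * eapply computes_comp1; [apply computes_succ|].
        eapply computes_comp1; [apply computes_double | apply computes_cpair_snd].
    + intros; simpl. unfold shifted_sets. do 3 f_equal. lia.
Qed.

Lemma comb_game_namer_spec nm (Ft Fu : pfun)
  (HFt : forall p As, rep (seq_space (gamma_space nm)) p As ->
         exists q, Ft p = Some q /\ rep (gamma_space nm) q (tree_op As))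
  (HFu : forall p wB, rep (prod_space word_space (gamma_space nm)) p wB ->
         exists q, Fu p = Some q /\ rep (gamma_space nm) q (unscale wB))
  p xs : rep (seq_space (game_space nm)) p xs ->
  exists r, comb_game_namer Ft Fu p = Some r /\
    rep (game_space nm) r (comb_turn (fun m => fst (xs m)), comb_set (fun m => snd (xs m))).
Proof.
  intros Hp. set (As' := fun m => snd (xs (pred m))).
  destruct (HFt (shifted_sets p) As') as [q1 [E1 N1]].
  { intros i. simpl. rewrite component_shifted_sets. apply (Hp (pred i)). }
  destruct (HFu (join (fun _ => 1) q1) ([true], tree_op As')) as [q2 [E2 N2]].
  { split; [|simpl; rewrite rhalf_join; exact N1].
    rewrite lhalf_join. split; [reflexivity|]. intros [|i] Hi; [reflexivity | simpl in Hi; lia]. }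
  destruct (HFt (seq_const q2) (fun _ => unscale ([true], tree_op As'))) as [q3 [E3 N3]].
  { intros i. simpl. rewrite component_seq_const. exact N2. }
  exists (join (comb_turn_code p) q3). split.
  - unfold comb_game_namer, pjoin, pcomp, pointwise. rewrite E1, E2, E3. reflexivity.
  - split; simpl; [rewrite lhalf_join | rewrite rhalf_join; exact N3].
    apply comb_turn_code_spec. intros m w. apply (Hp m).
Qed.

Lemma parallelization_le_FindWS nm (Hsa : standing_assumptions nm)
  (Htree : @computable_op (seq_space (gamma_space nm)) (gamma_space nm) tree_op) :
  weihrauch_le (parallelization (FindWS nm)) (FindWS nm).
Proof.
  destruct Htree as [Ft [cFt HFt]]. destruct (sa_unscale nm Hsa) as [Fu [cFu HFu]].
  exists (pointwise (read_answer (fun N => branch_code (cpair_fst N) (cpair_snd N)))),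
    (comb_game_namer Ft Fu).
  split; [|split; [apply computable_comb_game_namer; assumption|]].
  - apply (computable_read_answer (rfComp prog_branch_code [prog_cpair_fst; prog_cpair_snd])).
    eapply computes_ext; [eapply computes_comp2; [apply computes_branch_code
      | apply computes_cpair_fst | apply computes_cpair_snd] | reflexivity].
  - intros G HG p xs Hp [ys0 Hys0].
    set (D := fun m => fst (xs m)). set (As := fun m => snd (xs m)).
    assert (Hdom : forall m, exists s, winning1 (D m) (As m) s) by (intros m; apply (Hys0 m)).
    destruct (functional_choice _ Hdom) as [S1 HS1].
    pose proof (comb_strategy_winning D As S1 HS1) as Wcomb.
    destruct (comb_game_namer_spec nm Ft Fu HFt HFu p xs Hp) as [r [Er Hr]].
    destruct (HG r (comb_turn D, comb_set As) Hr) as [q [Gq [s [Hs [_ Ws]]]]].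
    { exists (comb_strategy S1). split; [exists (comb_strategy S1)|left]; exact Wcomb. }
    assert (W : winning1 (comb_turn D) (comb_set As) s).
    { destruct Ws as [W|W]; [exact W|]. exfalso. exact (W _ (Wcomb s)). }
    exists (fun N => q (branch_code (cpair_fst N) (cpair_snd N))). split.
    + unfold pcomp. rewrite Er, Gq. unfold pointwise. rewrite read_answer_join. reflexivity.
    + exists (fun m => branch_strategy m s). split.
      * intros i w. simpl. unfold component.
        rewrite cpair_fst_cpair, cpair_snd_cpair, branch_code_wcode. apply Hs.
      * intros i. split; [apply Hdom | left; exact (branch_strategy_winning D As s W i)].
Qed.

Theorem proposition20 (nm : pointclass_name)
  (Hsa : standing_assumptions nm)
  (Htree : @computable_op (seq_space (gamma_space nm)) (gamma_space nm) tree_op) :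
  weihrauch_equiv (FindWS nm) (parallelization (FindWS nm)).
Proof.
  split; [apply FindWS_le_parallelization | apply parallelization_le_FindWS; assumption].
Qed.
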